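(* Let $X$ and $Y$ be monotone sequence classes with $\varepsilon\le\alpha_{X,Y}$. Suppose that $X$ and $Y$ are finitely determined or finitely dominated and that one of them is finitely boundedly complete. Then for all Banach spaces $E,F$, $(E\otimes_{\alpha_{X,Y}}F)^*$ is isometrically isomorphic to $\mathcal{L}_{X,Y;\ell_1}(E,F;\mathbb{K})$, via the map sending $A$ to the linear functional $\sum_{j=1}^n x_j\otimes y_j\mapsto\sum_{j=1}^nA(x_j,y_j)$.
   Context: All Banach spaces are over $\mathbb{K}=\mathbb{R}$ or $\mathbb{C}$; $\varepsilon$ denotes the injective tensor norm. A sequence class is a rule $X$ assigning to each Banach space $E$ a Banach space $X(E)$ which is a vector subspace of $E^{\mathbb{N}}$ (coordinatewise operations) with $c_{00}(E)\subseteq X(E)$, $\|(x_j)\|_\infty\le\|(x_j)\|_{X(E)}$, and $\|x\cdot e_j\|_{X(E)}=\|x\|_E$ ($x$ in the $j$-th coordinate, zeros elsewhere). $(x_j)_{j=1}^n$ denotes $(x_1,\dots,x_n,0,0,\dots)$. $X$ is monotone if $\|(0,\dots,0,x_1,\dots,x_n,0,\dots)\|_{X(E)}=\|(x_1,\dots,x_n,0,\dots)\|_{X(E)}$ for any number of leading zeros. $X$ is finitely determined if: $(x_j)\in X(E)$ iff $\sup_k\|(x_j)_{j=1}^k\|_{X(E)}<\infty$, and then $\|(x_j)\|_{X(E)}$ equals this supremum. $X$ is finitely dominated if there is a finitely determined sequence class $Z$ with $X(E)$ a closed subspace of $Z(E)$ for all $E$ and either (i) for $(x_j)\in Z(E)$: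 $(x_j)\in X(E)$ iff $\lim_k\|(x_j)_{j=k}^\infty\|_{Z(E)}=0$, or (ii) for $(x_j)\in Z(E)$: $(x_j)\in X(E)$ iff $\lim_{k,l}\|(x_j)_{j=k}^l\|_{Z(E)}=0$. $X$ is finitely boundedly complete if for every $E$, $n$, $(x_j)_{j=1}^n\in X(E)$ and scalars $\lambda_1,\dots,\lambda_n$: $\|(\lambda_jx_j)_{j=1}^n\|_{X(E)}\le\max_j|\lambda_j|\cdot\|(x_j)_{j=1}^n\|_{X(E)}$. For $u\in E\otimes F$, $\alpha_{X,Y}(u)=\inf\{\|(x_j)_{j=1}^n\|_{X(E)}\|(y_j)_{j=1}^n\|_{Y(F)}:u=\sum_{j=1}^nx_j\otimes y_j\}$, and $E\otimes_{\alpha_{X,Y}}F$ is $E\otimes F$ with this quasi-norm. A bilinear form $A\colon E\times F\to\mathbb{K}$ is $(X,Y;\ell_1)$-summing if $(A(x_j,y_j))_j\in\ell_1$ whenever $(x_j)\in X(E)$, $(y_j)\in Y(F)$; $\mathcal{L}_{X,Y;\ell_1}(E,F;\mathbb{K})$ denotes the space of such forms with norm $\|A\|_{X,Y;\ell_1}=\sup\{\|(A(x_j,y_j))_j\|_1:(x_j)\in B_{X(E)},(y_j)\in B_{Y(F)}\}$. *)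

From HB Require Import structures.
From mathcomp Require Import all_boot all_order all_algebra.
From mathcomp Require Import all_classical all_reals all_analysis.
From mathcomp Require Import complex.

Set Implicit Arguments.
Unset Strict Implicit.
Unset Printing Implicit Defensive.

Import Order.TTheory GRing.Theory Num.Theory.
Import numFieldNormedType.Exports.
Local Open Scope ring_scope.

(* Sequences are indexed by nat starting at 0: the paper's x_1, x_2, ...
   are x 0, x 1, ...  *)

Section Sequences.
Variable K : numFieldType.
Variable E : normedModType K.

Definition trunc (n : nat) (x : nat -> E) : nat -> E :=
  fun j => if (j < n)%N then x j else 0.

Definition tail (k : nat) (x : nat -> E) : nat -> E :=
  fun j => if (k <= j)%N then x j else 0.

Definition seg (k l : nat) (x : nat -> E) : nat -> E :=
  fun j => if (k <= j <= l)%N then x j else 0.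

Definition shift (m : nat) (x : nat -> E) : nat -> E :=
  fun j => if (m <= j)%N then x (j - m)%N else 0.

Definition single (j : nat) (a : E) : nat -> E :=
  fun i => if i == j then a else 0.

End Sequences.

Definition lim0 {K : numFieldType} (s : nat -> K) : Prop :=
  forall e : K, 0 < e -> exists N : nat, forall k, (N <= k)%N -> s k < e.

Definition lim0_2 {K : numFieldType} (s : nat -> nat -> K) : Prop :=
  forall e : K, 0 < e -> exists N : nat,
    forall k l, (N <= k)%N -> (N <= l)%N -> s k l < e.

Definition is_sup_seq {K : numFieldType} (s : nat -> K) (v : K) : Prop :=
  (forall k, s k <= v) /\ (forall C, (forall k, s k <= C) -> v <= C).

(* A Banach space X(E) which is a vector subspace of E^N (coordinatewise
   operations), containing c00(E), with ||.||_oo <= ||.||_X and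
   ||x e_j||_X = ||x||_E.  smem is the membership predicate, snorm the norm
   (its values outside smem are irrelevant). *)
Record SeqSpace (K : numFieldType) (E : completeNormedModType K) := {
  smem : (nat -> E) -> Prop;
  snorm : (nat -> E) -> K;
  smem0 : smem (fun _ => 0);
  smemD : forall x y, smem x -> smem y -> smem (fun j => x j + y j);
  smemZ : forall (a : K) x, smem x -> smem (fun j => a *: x j);
  snormD : forall x y, smem x -> smem y ->
    snorm (fun j => x j + y j) <= snorm x + snorm y;
  snormZ : forall (a : K) x, smem x -> snorm (fun j => a *: x j) = `|a| * snorm x;
  snorm_eq0 : forall x, smem x -> snorm x = 0 -> x = (fun _ => 0);
  scomplete : forall u : nat -> nat -> E, (forall k, smem (u k)) ->
    lim0_2 (fun k l => snorm (fun j => u k j - u l j)) ->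
    exists v, smem v /\ lim0 (fun k => snorm (fun j => u k j - v j));
  sc00 : forall n x, smem (trunc n x);
  snorm_sup : forall x, smem x -> forall j, `|x j| <= snorm x;
  snorm_single : forall j (a : E), snorm (single j a) = `|a|
}.

Definition SequenceClass (K : numFieldType) :=
  forall E : completeNormedModType K, SeqSpace E.

Section Classes.
Variable K : numFieldType.
Implicit Types X Y Z : SequenceClass K.

Definition monotone X : Prop :=
  forall (E : completeNormedModType K) (x : nat -> E) (n m : nat),
    snorm (X E) (shift m (trunc n x)) = snorm (X E) (trunc n x).

Definition finitely_determined X : Prop :=
  forall (E : completeNormedModType K) (x : nat -> E),
    (smem (X E) x <-> exists C, forall k, snorm (X E) (trunc k x) <= C) /\
    (smem (X E) x -> is_sup_seq (fun k => snorm (X E) (trunc k x)) (snorm (X E) x)).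

Definition closed_subspace_class X Z : Prop :=
  forall E : completeNormedModType K,
    (forall x, smem (X E) x -> smem (Z E) x) /\
    (forall x, smem (X E) x -> snorm (X E) x = snorm (Z E) x) /\
    (forall (u : nat -> nat -> E) (v : nat -> E),
       (forall k, smem (X E) (u k)) -> smem (Z E) v ->
       lim0 (fun k => snorm (Z E) (fun j => u k j - v j)) -> smem (X E) v).

Definition finitely_dominated X : Prop :=
  exists Z : SequenceClass K,
    finitely_determined Z /\ closed_subspace_class X Z /\
    ((forall (E : completeNormedModType K) (x : nat -> E), smem (Z E) x ->
        (smem (X E) x <-> lim0 (fun k => snorm (Z E) (tail k x)))) \/
     (forall (E : completeNormedModType K) (x : nat -> E), smem (Z E) x ->
        (smem (X E) x <-> lim0_2 (fun k l => snorm (Z E) (seg k l x))))).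

Definition finitely_boundedly_complete X : Prop :=
  forall (E : completeNormedModType K) (x : nat -> E) (lam : nat -> K) (n : nat),
    snorm (X E) (trunc n (fun j => lam j *: x j)) <=
      (\big[Num.max/0]_(j < n) `|lam j|) * snorm (X E) (trunc n x).

End Classes.

Section Tensor.
Variable K : numFieldType.

Definition lin_functional (V : lmodType K) (f : V -> K) : Prop :=
  forall (a : K) (u v : V), f (a *: u + v) = a * f u + f v.

Definition bilinear_form (E F : lmodType K) (B : E -> F -> K) : Prop :=
  (forall y, lin_functional (fun x => B x y)) /\
  (forall x, lin_functional (fun y => B x y)).

(* This characterizes E (x) F up to
   canonical isomorphism. *)
Definition is_tensor_product (E F T : lmodType K) (tens : E -> F -> T) : Prop :=
  [/\ (forall (a : K) x x' y, tens (a *: x + x') y = a *: tens x y + tens x' y),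
      (forall (a : K) x y y', tens x (a *: y + y') = a *: tens x y + tens x y'),
      (forall u : T, exists (n : nat) (x : nat -> E) (y : nat -> F),
          u = \sum_(j < n) tens (x j) (y j)) &
      (forall B : E -> F -> K, bilinear_form B ->
          exists f : T -> K, lin_functional f /\ forall x y, f (tens x y) = B x y)].

End Tensor.

Section Norms.
Variable K : numFieldType.
Variables (X Y : SequenceClass K).
Variables (E F : completeNormedModType K) (T : lmodType K) (tens : E -> F -> T).

(* alpha_{X,Y}(u) <= c, where alpha_{X,Y}(u) is the infimum of
   ||(x_j)_{j=1}^n||_X ||(y_j)_{j=1}^n||_Y over representations
   u = sum_{j=1}^n x_j (x) y_j *)
Definition alpha_le (u : T) (c : K) : Prop :=
  forall d : K, 0 < d -> exists (n : nat) (x : nat -> E) (y : nat -> F),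
    u = \sum_(j < n) tens (x j) (y j) /\
    snorm (X E) (trunc n x) * snorm (Y F) (trunc n y) <= c + d.

(* eps(u) <= c, where eps is the injective tensor norm:
   eps(u) = sup { |sum_j phi(x_j) psi(y_j)| : phi in B_{E'}, psi in B_{F'} };
   the functional u |-> sum_j phi(x_j) psi(y_j) is the linear functional g on T
   with g (x (x) y) = phi x * psi y. *)
Definition eps_le (u : T) (c : K) : Prop :=
  forall g : T -> K, lin_functional g ->
    (exists (phi : E -> K) (psi : F -> K),
       [/\ lin_functional phi, lin_functional psi,
           (forall x, `|phi x| <= `|x|), (forall y, `|psi y| <= `|y|) &
           (forall x y, g (tens x y) = phi x * psi y)]) ->
    `|g u| <= c.

(* C is an upper bound for the dual norm of f on E (x)_alpha F:
   sup { |f u| : alpha(u) <= 1 } <= C *)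
Definition dual_ub (f : T -> K) (C : K) : Prop :=
  forall u : T, alpha_le u 1 -> `|f u| <= C.

(* A is (X,Y;l1)-summing: (A(x_j,y_j))_j in l1 (bounded partial sums of
   absolute values) whenever (x_j) in X(E), (y_j) in Y(F) *)
Definition summing (A : E -> F -> K) : Prop :=
  forall (x : nat -> E) (y : nat -> F), smem (X E) x -> smem (Y F) y ->
    exists C : K, forall n, \sum_(j < n) `|A (x j) (y j)| <= C.

(* C is an upper bound for ||A||_{X,Y;l1} *)
Definition summing_ub (A : E -> F -> K) (C : K) : Prop :=
  forall (x : nat -> E) (y : nat -> F),
    smem (X E) x -> snorm (X E) x <= 1 -> smem (Y F) y -> snorm (Y F) y <= 1 ->
    forall n, \sum_(j < n) `|A (x j) (y j)| <= C.

End Norms.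

Definition theorem3p1_stmt (K : numFieldType) : Prop :=
  forall X Y : SequenceClass K,
    monotone X -> monotone Y ->
    (forall (E F : completeNormedModType K) (T : lmodType K) (tens : E -> F -> T),
       is_tensor_product tens ->
       forall (u : T) (c : K), alpha_le X Y tens u c -> eps_le tens u c) ->
    (finitely_determined X \/ finitely_dominated X) ->
    (finitely_determined Y \/ finitely_dominated Y) ->
    (finitely_boundedly_complete X \/ finitely_boundedly_complete Y) ->
    forall (E F : completeNormedModType K) (T : lmodType K) (tens : E -> F -> T),
      is_tensor_product tens ->
      (* A |-> phi_A maps L_{X,Y;l1}(E,F;K) isometrically into (E (x)_alpha F)^* *)
      (forall A : E -> F -> K, bilinear_form A -> summing X Y A ->
         exists f : T -> K,
           [/\ lin_functional f,
               (forall x y, f (tens x y) = A x y),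
               (exists C, dual_ub X Y tens f C) &
               (forall C, dual_ub X Y tens f C <-> summing_ub X Y A C)]) /\
      (* ... and onto: every element of (E (x)_alpha F)^* is some phi_A *)
      (forall f : T -> K, lin_functional f -> (exists C, dual_ub X Y tens f C) ->
         bilinear_form (fun x y => f (tens x y)) /\
         summing X Y (fun x y => f (tens x y))).

From Pilot Require Import Defs.
From mathcomp Require Import all_boot all_order all_algebra.
From mathcomp Require Import all_classical all_reals all_analysis.
From mathcomp Require Import complex zify ring.

Set Implicit Arguments.
Unset Strict Implicit.
Unset Printing Implicit Defensive.
Import Order.TTheory GRing.Theory Num.Theory.
Import numFieldNormedType.Exports.
Local Open Scope ring_scope.

(** The map [A |-> phi_A] is isometric because both norms are controlled by
    the same finite data.  A representation [u = sum_j x_j (x) y_j] gives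
    [|phi_A u| <= ||A||_{X,Y;l1} ||(x_j)_{j<=n}||_X ||(y_j)_{j<=n}||_Y];
    conversely, multiplying the x_j (or the y_j) by unimodular scalars, which
    by finite bounded completeness does not increase their norm, turns
    [sum_j |A(x_j, y_j)|] into [phi_A] of a tensor of alpha-norm at most
    [||(x_j)_{j<=n}||_X ||(y_j)_{j<=n}||_Y], and truncations do not increase
    norms in finitely determined or dominated classes.  That every summing
    form has a finite summing norm is a gliding hump argument: if witnesses
    [(x^k, y^k)] have sums exceeding [k 4^k], monotonicity and completeness
    glue the blocks [2^-k x^k] and [2^-k y^k] into sequences of X(E) and Y(F)
    along which the sums of [|A(x_j, y_j)|] are unbounded. *)

Definition archimedean_field (K : numFieldType) : Prop :=
  forall c : K, 0 <= c -> exists k : nat, c <= k%:R.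

Lemma archimedean_field_real (R : realType) : archimedean_field R.
Proof. by move=> c c0; exists (Num.Def.archi_bound c); exact/ltW/archi_boundP. Qed.

Lemma archimedean_field_complex (R : realType) : archimedean_field R[i].
Proof.
move=> c c0; have c_real := ger0_real c0.
have Rec0 : 0 <= complex.Re c by rewrite -ler0c (RRe_real c_real).
have [k ck] := archimedean_field_real Rec0.
by exists k; rewrite -(RRe_real c_real) -(rmorph_nat (real_complex R)) lecR.
Qed.

Section Exp2.
Variable K : numFieldType.

Lemma exp2V_halve k : (2 : K) ^- k = 2 * 2 ^- k.+1.
Proof. by rewrite exprS invfM mulrA mulfV ?mul1r // pnatr_eq0. Qed.

Lemma sum_exp2V k l : (k <= l)%N ->
  \sum_(k <= q < l) (2 : K) ^- q = 2 * 2 ^- k - 2 * 2 ^- l.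
Proof.
move=> kl; rewrite -(subnKC kl); elim: (l - k)%N => [|m IH].
  by rewrite addn0 big_geq // subrr.
by rewrite addnS big_nat_recr ?leq_addr //= IH (exp2V_halve (k + m)); ring.
Qed.

Lemma exp2V_small : archimedean_field K ->
  forall e : K, 0 < e -> exists N, forall k, (N <= k)%N -> 2 * 2 ^- k < e.
Proof.
move=> archK e e0; have [N HN] := archK (2 / e) (ltW (divr_gt0 (ltr0n _ 2) e0)).
exists N => k Nk; have pow_gt0 : 0 < (2 : K) ^+ k by rewrite exprn_gt0 // ltr0n.
rewrite ltr_pdivrMr // mulrC -ltr_pdivrMr //; apply: le_lt_trans HN _.
by rewrite -natrX ltr_nat (leq_ltn_trans Nk) // ltn_expl.
Qed.

End Exp2.

Section SeqSpaceTheory.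
Variables (K : numFieldType) (E : completeNormedModType K) (S : SeqSpace E).
Implicit Types x y : nat -> E.

Lemma snorm_ge0 x : smem S x -> 0 <= snorm S x.
Proof. by move=> Sx; exact: le_trans (normr_ge0 (x 0%N)) (snorm_sup Sx 0%N). Qed.

Lemma snorm0 : snorm S (fun _ => 0) = 0.
Proof.
have -> : (fun _ : nat => 0 : E) = single 0 0.
  by apply: funext => i; rewrite /single; case: eqP.
by rewrite snorm_single normr0.
Qed.

Lemma smemN x : smem S x -> smem S (fun j => - x j).
Proof.
by move=> Sx; have := smemZ (-1) Sx; under eq_fun do rewrite scaleN1r.
Qed.

Lemma snormN x : smem S x -> snorm S (fun j => - x j) = snorm S x.
Proof.
move=> Sx; have := snormZ (-1) Sx; under eq_fun do rewrite scaleN1r.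
by rewrite normrN1 mul1r.
Qed.

Lemma smemB x y : smem S x -> smem S y -> smem S (fun j => x j - y j).
Proof. by move=> Sx Sy; exact: smemD Sx (smemN Sy). Qed.

Lemma smem_sum (I : Type) (r : seq I) (b : I -> nat -> E) :
  (forall q, smem S (b q)) -> smem S (fun j => \sum_(q <- r) b q j).
Proof.
move=> Sb; elim: r => [|q r IH].
  by under eq_fun do rewrite big_nil; exact: smem0.
by under eq_fun do rewrite big_cons; exact: smemD.
Qed.

Lemma snorm_sum_le (I : Type) (r : seq I) (b : I -> nat -> E) (c : I -> K) :
  (forall q, smem S (b q)) -> (forall q, snorm S (b q) <= c q) ->
  snorm S (fun j => \sum_(q <- r) b q j) <= \sum_(q <- r) c q.
Proof.
move=> Sb bc; elim: r => [|q r IH].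
  by under eq_fun do rewrite big_nil; rewrite snorm0 big_nil.
under eq_fun do rewrite big_cons; rewrite big_cons.
exact: le_trans (snormD (Sb q) (smem_sum r Sb)) (lerD (bc q) IH).
Qed.

Lemma snorm_trunc0 n x :
  snorm S (trunc n x) = 0 -> forall j, (j < n)%N -> x j = 0.
Proof.
move=> /(snorm_eq0 (sc00 S n x)) x0 j jn.
by have := congr1 (fun z => z j) x0; rewrite /= /trunc jn.
Qed.

Lemma series_exp2V_cauchy (b : nat -> nat -> E) : archimedean_field K ->
  (forall q, smem S (b q)) -> (forall q, snorm S (b q) <= 2 ^- q) ->
  lim0_2 (fun k l =>
    snorm S (fun j => \sum_(0 <= q < k) b q j - \sum_(0 <= q < l) b q j)).
Proof.
move=> archK Sb bq e e0; have [N HN] := exp2V_small archK e0.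
exists N => k l Nk Nl; wlog kl : k l Nk Nl / (k <= l)%N.
  move=> hwlog; have [/hwlog|lk] := leqP k l; first exact.
  rewrite -snormN; last by apply: smemB; exact: smem_sum.
  by under eq_fun do rewrite opprB; exact: hwlog (ltnW lk).
have -> : (fun j => \sum_(0 <= q < k) b q j - \sum_(0 <= q < l) b q j)
        = (fun j => - \sum_(k <= q < l) b q j).
  by apply: funext => j; rewrite (big_cat_nat (leq0n k) kl) /= opprD addNKr.
rewrite snormN; last exact: smem_sum.
apply: le_lt_trans (snorm_sum_le _ Sb bq) _.
rewrite sum_exp2V //; apply: le_lt_trans _ (HN k Nk).
by rewrite gerDl oppr_le0 mulr_ge0 // invr_ge0 exprn_ge0.
Qed.

Lemma coord_of_snorm_lim0 (u : nat -> nat -> E) v j (c : E) (N : nat) :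
  (forall k, smem S (u k)) -> smem S v ->
  lim0 (fun k => snorm S (fun i => u k i - v i)) ->
  (forall k, (N <= k)%N -> u k j = c) -> v j = c.
Proof.
move=> Su Sv uv uc; apply/eqP; rewrite eq_sym -subr_eq0 -normr_le0.
apply/ler_addgt0Pr => e e0; rewrite add0r.
have [M HM] := uv e e0; set k := maxn N M.
rewrite -(uc k (leq_maxl _ _)); apply/ltW/(le_lt_trans _ (HM k (leq_maxr _ _))).
exact: (snorm_sup (smemB (Su k) Sv)).
Qed.

End SeqSpaceTheory.

Section Blocks.
Variables (K : numFieldType) (E : normedModType K).

Definition offset (ns : nat -> nat) (k : nat) : nat :=
  (\sum_(0 <= q < k) ns q)%N.

Definition block (ns : nat -> nat) (k : nat) (z : nat -> E) : nat -> E :=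
  Defs.shift (offset ns k) (trunc (ns k) z).

Lemma offset_leq ns k l : (k <= l)%N -> (offset ns k <= offset ns l)%N.
Proof. by move=> kl; rewrite /offset (big_cat_nat (leq0n k) kl) leq_addr. Qed.

Lemma offsetS ns k : offset ns k.+1 = (offset ns k + ns k)%N.
Proof. by rewrite /offset big_nat_recr. Qed.

Lemma block_offset ns q k i z : (i < ns k)%N ->
  block ns q z (offset ns k + i) = if q == k then z i else 0.
Proof.
move=> ik; rewrite /block /Defs.shift /trunc.
have [qk|kq|->] := ltngtP q k; last by rewrite leq_addr addKn ik.
- have := offset_leq ns qk; rewrite offsetS => le_qk.
  by case: ifP => // _; rewrite ifF //; apply/negbTE; rewrite -leqNgt; lia.
- have := offset_leq ns kq; rewrite offsetS => le_kq.
  by rewrite ifF //; apply/negbTE; rewrite -ltnNge; lia.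
Qed.

Lemma sum_block_offset ns (zs : nat -> nat -> E) m k i :
  (k < m)%N -> (i < ns k)%N ->
  \sum_(0 <= q < m) block ns q (zs q) (offset ns k + i) = zs k i.
Proof.
move=> km ik; rewrite (bigD1_seq k) ?mem_index_iota ?iota_uniq //=.
rewrite block_offset // eqxx.
by rewrite big1 ?addr0 // => q /negbTE qk; rewrite block_offset // qk.
Qed.

Lemma truncZ n (a : K) (x : nat -> E) :
  trunc n (fun j => a *: x j) = (fun j => a *: trunc n x j).
Proof. by apply: funext => j; rewrite /trunc; case: ifP; rewrite ?scaler0. Qed.

Lemma shift_trunc m n (x : nat -> E) :
  Defs.shift m (trunc n x) = trunc (m + n) (Defs.shift m x).
Proof.
apply: funext => j; rewrite /Defs.shift /trunc.
by case: (leqP m j) => mj; rewrite ?ltn_subLR //; case: ifP.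
Qed.

End Blocks.

Section TruncContractive.
Variable K : numFieldType.
Implicit Type X : SequenceClass K.

Definition trunc_contractive X : Prop :=
  forall (E : completeNormedModType K) (x : nat -> E) (n : nat),
    smem (X E) x -> snorm (X E) (trunc n x) <= snorm (X E) x.

Lemma finitely_determined_trunc_contractive X :
  finitely_determined X -> trunc_contractive X.
Proof. by move=> detX E x n Xx; have [_ /(_ Xx) [+ _]] := detX E x; apply. Qed.

Lemma finitely_dominated_trunc_contractive X :
  finitely_dominated X -> trunc_contractive X.
Proof.
move=> [Z [/finitely_determined_trunc_contractive Ztrunc [XZ _]]] E x n Xx.
have [subXZ [normXZ _]] := XZ E.
by rewrite !normXZ //; [exact: Ztrunc _ _ _ (subXZ _ Xx) | exact: sc00].
Qed.

Lemma determined_or_dominated_trunc_contractive X :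
  finitely_determined X \/ finitely_dominated X -> trunc_contractive X.
Proof.
by case; [exact: finitely_determined_trunc_contractive
         | exact: finitely_dominated_trunc_contractive].
Qed.

End TruncContractive.

Lemma glue_blocks (K : numFieldType) (X : SequenceClass K)
    (E : completeNormedModType K) (xs : nat -> nat -> E) (ns : nat -> nat) :
  archimedean_field K -> Defs.monotone X -> trunc_contractive X ->
  (forall k, smem (X E) (xs k)) -> (forall k, snorm (X E) (xs k) <= 1) ->
  exists2 v, smem (X E) v &
    forall k i, (i < ns k)%N -> v (offset ns k + i)%N = 2 ^- k *: xs k i.
Proof.
move=> archK monoX truncX Xxs xs1.
pose b q := block ns q (fun j => 2 ^- q *: xs q j).
have Xb q : smem (X E) (b q) by rewrite /b /block shift_trunc; exact: sc00.
have b_le q : snorm (X E) (b q) <= 2 ^- q.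
  have exp_ge0 : 0 <= (2 : K) ^- q by rewrite invr_ge0 exprn_ge0.
  rewrite /b /block monoX truncZ snormZ; last exact: sc00.
  by rewrite ger0_norm // ler_piMr // (le_trans (truncX _ _ _ (Xxs q))).
have [v [Xv lim_v]] := scomplete (fun k => smem_sum (index_iota 0 k) Xb)
  (series_exp2V_cauchy archK Xb b_le).
exists v => // k i ik.
apply: (coord_of_snorm_lim0 (N := k.+1) _ Xv lim_v) => [m|m km].
  exact: smem_sum.
by rewrite sum_block_offset.
Qed.

Lemma exists_phase (K : numFieldType) (z : K) :
  exists l : K, `|l| <= 1 /\ l * z = `|z|.
Proof.
have [->|z_neq0] := eqVneq z 0; first by exists 1; rewrite normr1 mulr0 normr0.
exists (`|z| / z); rewrite mulfVK //; split=> //.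
by rewrite normrM normfV normr_id mulfV ?normr_eq0.
Qed.

Section LinFunctional.
Variables (K : numFieldType) (V : lmodType K) (f : V -> K).
Hypothesis linf : lin_functional f.

Lemma lin_functional0 : f 0 = 0.
Proof.
have f0D := linf 1 0 0; rewrite scaler0 addr0 mul1r in f0D.
by apply: (addrI (f 0)); rewrite addr0 -f0D.
Qed.

Lemma lin_functionalZ a u : f (a *: u) = a * f u.
Proof. by have := linf a u 0; rewrite !addr0 lin_functional0 addr0. Qed.

Lemma lin_functional_sum (I : Type) (r : seq I) (g : I -> V) :
  f (\sum_(j <- r) g j) = \sum_(j <- r) f (g j).
Proof.
elim: r => [|a r IH]; first by rewrite !big_nil lin_functional0.
by rewrite !big_cons -IH -[X in f (X + _)]scale1r linf mul1r.
Qed.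

End LinFunctional.

Section SummingForms.
Variables (K : numFieldType) (X Y : SequenceClass K).
Variables (E F : completeNormedModType K) (A : E -> F -> K).
Hypothesis bilA : bilinear_form A.

Lemma bilinear_formZ s t x y : A (s *: x) (t *: y) = s * t * A x y.
Proof.
case: bilA => linAl linAr.
have -> : A (s *: x) (t *: y) = s * A x (t *: y) := lin_functionalZ (linAl _) s x.
have -> : A x (t *: y) = t * A x y := lin_functionalZ (linAr x) t y.
by rewrite mulrA.
Qed.

Lemma bilinear_form0l y : A 0 y = 0.
Proof. by case: bilA => linAl _; exact: lin_functional0 (linAl y). Qed.

Lemma bilinear_form0r x : A x 0 = 0.
Proof. by case: bilA => _ linAr; exact: lin_functional0 (linAr x). Qed.

Lemma summing_ub_ge0 C : summing_ub X Y A C -> 0 <= C.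
Proof.
move=> AC; have := AC _ _ (smem0 _) _ (smem0 _) _ 0%N.
by rewrite big_ord0; apply; rewrite snorm0.
Qed.

Lemma summing_ub_scaled C x y a b : summing_ub X Y A C ->
  smem (X E) x -> smem (Y F) y -> 0 < a -> 0 < b ->
  snorm (X E) x <= a -> snorm (Y F) y <= b ->
  forall n, \sum_(j < n) `|A (x j) (y j)| <= C * (a * b).
Proof.
move=> AC Xx Yy a0 b0 xa yb n.
have [a_ge0 b_ge0] := (ltW a0, ltW b0).
have := AC _ _ (smemZ a^-1 Xx) _ (smemZ b^-1 Yy) _ n.
have -> : \sum_(j < n) `|A (a^-1 *: x j) (b^-1 *: y j)|
        = (a * b)^-1 * \sum_(j < n) `|A (x j) (y j)|.
  rewrite mulr_sumr; apply: eq_bigr => j _.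
  by rewrite bilinear_formZ normrM invfM ger0_norm // mulr_ge0 // invr_ge0.
rewrite ler_pdivrMl ?mulr_gt0 // mulrC; apply.
  by rewrite snormZ // ger0_norm ?invr_ge0 // mulrC ler_pdivrMr // mul1r.
by rewrite snormZ // ger0_norm ?invr_ge0 // mulrC ler_pdivrMr // mul1r.
Qed.

Lemma summing_ub_trunc C n (x : nat -> E) (y : nat -> F) :
  summing_ub X Y A C ->
  \sum_(j < n) `|A (x j) (y j)|
    <= C * (snorm (X E) (trunc n x) * snorm (Y F) (trunc n y)).
Proof.
move=> AC; have C0 := summing_ub_ge0 AC.
have [a0|a_neq0] := eqVneq (snorm (X E) (trunc n x)) 0.
  rewrite a0 mul0r mulr0 big1 // => j _.
  by rewrite (snorm_trunc0 a0) ?bilinear_form0l ?normr0.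
have [b0|b_neq0] := eqVneq (snorm (Y F) (trunc n y)) 0.
  rewrite b0 mulr0 mulr0 big1 // => j _.
  by rewrite (snorm_trunc0 b0) ?bilinear_form0r ?normr0.
have truncE (G : normedModType K) (z : nat -> G) (j : 'I_n) : trunc n z j = z j.
  by rewrite /trunc ltn_ord.
under eq_bigr => j _ do rewrite -(truncE _ x j) -(truncE _ y j).
have Xx := sc00 (X E) n x; have Yy := sc00 (Y F) n y.
apply: summing_ub_scaled => //.
  by rewrite lt0r a_neq0 (snorm_ge0 Xx).
by rewrite lt0r b_neq0 (snorm_ge0 Yy).
Qed.

Lemma summing_of_summing_ub C : summing_ub X Y A C -> summing X Y A.
Proof.
move=> AC x y Xx Yy; exists (C * ((snorm (X E) x + 1) * (snorm (Y F) y + 1))).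
by apply: summing_ub_scaled; rewrite ?lerDl ?ltr_wpDl ?snorm_ge0.
Qed.

Lemma not_summing_ub_witness :
  ~ (exists C, summing_ub X Y A C) -> forall M : K,
  exists (x : nat -> E) (y : nat -> F) (n : nat),
    [/\ smem (X E) x, snorm (X E) x <= 1, smem (Y F) y, snorm (Y F) y <= 1 &
        ~~ (\sum_(j < n) `|A (x j) (y j)| <= M)].
Proof.
move=> unbounded M; apply: contrapT => noWit; apply: unbounded; exists M.
move=> x y Xx x1 Yy y1 n; apply: contrapT => /negP notM.
by apply: noWit; exists x, y, n.
Qed.

Lemma summing_ub_of_summing : archimedean_field K ->
  Defs.monotone X -> Defs.monotone Y -> trunc_contractive X -> trunc_contractive Y ->
  summing X Y A -> exists C, summing_ub X Y A C.
Proof.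
move=> archK monoX monoY truncX truncY sumA.
apply: contrapT => /not_summing_ub_witness witness.
have /choice [xs /choice [ys /choice [ns wit]]] :=
  fun k : nat => witness (k%:R * (2 ^+ k * 2 ^+ k)).
have Xxs k : smem (X E) (xs k) by case: (wit k).
have xs1 k : snorm (X E) (xs k) <= 1 by case: (wit k).
have Yys k : smem (Y F) (ys k) by case: (wit k).
have ys1 k : snorm (Y F) (ys k) <= 1 by case: (wit k).
have [v Xv v_eq] := glue_blocks ns archK monoX truncX Xxs xs1.
have [u Yu u_eq] := glue_blocks ns archK monoY truncY Yys ys1.
have [C0 sum_le_C0] := sumA v u Xv Yu.
have C0_ge0 : 0 <= C0 by have := sum_le_C0 0%N; rewrite big_ord0.
have [N C0_le_N] := archK C0 C0_ge0.
have block_le :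
    \sum_(i < ns N) `|A (v (offset ns N + i)%N) (u (offset ns N + i)%N)| <= N%:R.
  apply: le_trans C0_le_N; apply: le_trans (sum_le_C0 (offset ns N + ns N)%N).
  by rewrite big_split_ord /= lerDr sumr_ge0.
case: (wit N) => _ _ _ _ /negP; apply; move: block_le.
under eq_bigr => i _ do rewrite v_eq // u_eq // bilinear_formZ normrM.
have pow2_gt0 : 0 < (2 : K) ^+ N by rewrite exprn_gt0.
rewrite -mulr_sumr ger0_norm ?mulr_ge0 ?invr_ge0 ?exprn_ge0 // -invfM.
by rewrite ler_pdivrMl ?mulr_gt0 // mulrC.
Qed.

End SummingForms.

Section DualOfTensorProduct.
Variables (K : numFieldType) (X Y : SequenceClass K).
Variables (E F : completeNormedModType K) (T : lmodType K) (tens : E -> F -> T).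
Hypothesis tensT : is_tensor_product tens.
Variable f : T -> K.
Hypothesis linf : lin_functional f.

Lemma bilinear_form_tens : bilinear_form (fun x y => f (tens x y)).
Proof.
by case: tensT => tensl tensr _ _; split=> [y|x] a u v; rewrite ?tensl ?tensr linf.
Qed.

Lemma dual_ub_of_summing_ub C :
  summing_ub X Y (fun x y => f (tens x y)) C -> dual_ub X Y tens f C.
Proof.
move=> AC u u1; have C0 := summing_ub_ge0 AC.
apply/ler_addgt0Pr => e e0; have C1_gt0 : 0 < C + 1 by rewrite ltr_wpDl.
have [n [x [y [-> xy_le]]]] := u1 (e / (C + 1)) (divr_gt0 e0 C1_gt0).
rewrite lin_functional_sum //; apply: le_trans (ler_norm_sum _ _ _) _.
apply: le_trans (summing_ub_trunc bilinear_form_tens n x y AC) _.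
apply: le_trans (ler_wpM2l C0 xy_le) _.
rewrite mulrDr mulr1 lerD2l mulrA ler_pdivrMr // mulrC ler_pM2l //.
by rewrite lerDl.
Qed.

Lemma dual_ub_trunc C n (x : nat -> E) (y : nat -> F) : dual_ub X Y tens f C ->
  snorm (X E) (trunc n x) <= 1 -> snorm (Y F) (trunc n y) <= 1 ->
  `|\sum_(j < n) f (tens (x j) (y j))| <= C.
Proof.
move=> fC x1 y1; rewrite -lin_functional_sum //; apply: fC => d d0.
exists n, x, y; split=> //.
apply: le_trans (ler_pM (snorm_ge0 (sc00 _ _ _)) (snorm_ge0 (sc00 _ _ _)) x1 y1) _.
by rewrite mul1r lerDl ltW.
Qed.

Lemma summing_ub_of_dual_ub C : trunc_contractive X -> trunc_contractive Y ->
  finitely_boundedly_complete X \/ finitely_boundedly_complete Y ->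
  dual_ub X Y tens f C -> summing_ub X Y (fun x y => f (tens x y)) C.
Proof.
move=> truncX truncY fbc fC x y Xx x1 Yy y1 n.
have /choice [lam lam_phase] := fun j => exists_phase (f (tens (x j) (y j))).
have /andP [max_ge0 max_le1] : 0 <= \big[Num.max/0]_(j < n) `|lam j| <= 1.
  apply: (big_ind (fun v => 0 <= v <= 1)) => [|a b a01 b01|j _].
  - by rewrite lexx ler01.
  - by rewrite /Num.max /Order.max; case: ifP.
  - by rewrite normr_ge0 (lam_phase j).1.
have scaled_le1 (G : completeNormedModType K) (Z : SequenceClass K)
    (z : nat -> G) :
  finitely_boundedly_complete Z -> snorm (Z G) (trunc n z) <= 1 ->
  snorm (Z G) (trunc n (fun j => lam j *: z j)) <= 1.
  move=> fbcZ z1; apply: le_trans (fbcZ G z lam n) _.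
  exact: mulr_ile1 max_ge0 (snorm_ge0 (sc00 _ _ _)) max_le1 z1.
have xn1 := le_trans (truncX _ _ n Xx) x1.
have yn1 := le_trans (truncY _ _ n Yy) y1.
rewrite -[leLHS]ger0_norm ?sumr_ge0 //.
under eq_bigr => j _ do rewrite -(lam_phase j).2.
case: fbc => [fbcX|fbcY].
- under eq_bigr => j _
    do rewrite -(lin_functionalZ (bilinear_form_tens.1 (y j))) /=.
  exact: dual_ub_trunc fC (scaled_le1 _ _ _ fbcX xn1) yn1.
- under eq_bigr => j _
    do rewrite -(lin_functionalZ (bilinear_form_tens.2 (x j))) /=.
  exact: dual_ub_trunc fC xn1 (scaled_le1 _ _ _ fbcY yn1).
Qed.

End DualOfTensorProduct.

(* The hypothesis [eps <= alpha_{X,Y}] is deliberately unused: in the paper it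
   makes alpha_{X,Y} a norm, but the statement only speaks about upper bounds
   of the dual norm, which do not need it. *)
Lemma theorem3p1_archimedean (K : numFieldType) :
  archimedean_field K -> theorem3p1_stmt K.
Proof.
move=> archK X Y monoX monoY _ /determined_or_dominated_trunc_contractive truncX
  /determined_or_dominated_trunc_contractive truncY fbc E F T tens tensT; split.
- move=> A bilA sumA; have [_ _ _ /(_ A bilA) [f [linf f_tens]]] := tensT.
  have eA : A = (fun x y => f (tens x y)).
    by apply/funext => x; apply/funext => y; rewrite f_tens.
  subst A; exists f; split=> //.
  + have [C AC] := summing_ub_of_summing bilA archK monoX monoY truncX truncY sumA.
    by exists C; exact: dual_ub_of_summing_ub.
  + by move=> C; split; [exact: summing_ub_of_dual_ub | exact: dual_ub_of_summing_ub].
- move=> f linf [C fC]; have bilA := bilinear_form_tens tensT linf.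
  split=> //; apply: (summing_of_summing_ub bilA (C := C)).
  exact: summing_ub_of_dual_ub.
Qed.

Theorem theorem3p1 (R : realType) :
  theorem3p1_stmt R /\ theorem3p1_stmt R[i].
Proof.
split; apply: theorem3p1_archimedean.
  exact: archimedean_field_real.
exact: archimedean_field_complex.
Qed.
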